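(* Every nonzero Lie algebra endomorphism of $\mathbb{W}_1$ is an automorphism; that is, $\mathrm{End}(\mathbb{W}_1)\setminus\{0\} = \mathrm{Aut}(\mathbb{W}_1)$.
   Context: $\Bbbk$ is a field of characteristic zero; $\mathbb{W}_1 = \mathrm{Der}(\Bbbk[t]) = \Bbbk[t]\partial$, $\partial = d/dt$, with bracket $[f\partial,g\partial] = (fg'-f'g)\partial$. $\mathrm{End}$ and $\mathrm{Aut}$ denote Lie algebra endomorphisms and automorphisms. *)

(* W_1 = k[t] d/dt is modelled by {poly F}: f <-> f(t) d/dt. *)
From HB Require Import structures.
From mathcomp Require Import all_boot all_order all_algebra.
Set Implicit Arguments. Unset Strict Implicit. Unset Printing Implicit Defensive.
Import GRing.Theory.
Local Open Scope ring_scope.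

(* [f d, g d] = (f g' - f' g) d *)
Definition W1bracket (F : fieldType) (f g : {poly F}) : {poly F} :=
  f * g^`() - f^`() * g.

Definition W1_End (F : fieldType) (phi : {poly F} -> {poly F}) : Prop :=
  (forall (a : F) (f g : {poly F}), phi (a *: f + g) = a *: phi f + phi g) /\
  (forall f g : {poly F}, phi (W1bracket f g) = W1bracket (phi f) (phi g)).

(* Lie algebra automorphism: a bijective endomorphism (its inverse is then
   automatically a Lie algebra endomorphism). *)
Definition W1_Aut (F : fieldType) (phi : {poly F} -> {poly F}) : Prop :=
  W1_End phi /\ bijective phi.

(* Write e := phi 1 and P_k := phi X^k.  The relations [1, X^(k+1)] = (k+1) X^k and
   [X, X^k] = (k-1) X^k are transported by phi.  If deg e >= 1, the degree formula
   deg [f, g] = deg f + deg g - 1 (char 0, deg f <> deg g) bounds every deg P_k by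
   deg e, and reducing P_(k+1) modulo e shows P_k in [e, span(1, X)], a plane on which
   all brackets are proportional; this is incompatible with [e, P_1] = e <> 0 and
   [e, P_2] = 2 P_1.  So e = c is a nonzero constant, P_1 = X + b, and induction gives
   P_k = c u^k with u = (X + b) / c; hence phi p = c (p o u), which is invertible. *)

From HB Require Import structures.
From mathcomp Require Import all_boot all_order all_algebra.
From mathcomp Require Import zify ring.
Set Implicit Arguments. Unset Strict Implicit. Unset Printing Implicit Defensive.
Import GRing.Theory.
Local Open Scope ring_scope.

Local Notation br := W1bracket.

Lemma size2_polyE (R : nzRingType) (p : {poly R}) :
  (size p <= 2)%N -> p = p`_1 *: 'X + (p`_0)%:P.
Proof.
move=> p_le2; apply/polyP => i; rewrite coefD coefZ coefX coefC.
case: i => [|[|i]] /=; rewrite ?mulr0 ?mulr1 ?add0r ?addr0 //.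
exact: (leq_sizeP _ _ p_le2).
Qed.

Lemma comp_poly_affine_bij (F : fieldType) (a b : F) :
  a != 0 -> bijective (comp_poly (a *: 'X + b%:P)).
Proof.
move=> a_neq0; exists (comp_poly (a^-1 *: ('X - b%:P))) => p /=; rewrite -comp_polyA.
  rewrite comp_polyD comp_polyZ comp_polyX comp_polyC scalerA mulfV //.
  by rewrite scale1r subrK comp_polyXr.
rewrite comp_polyZ comp_polyB comp_polyX comp_polyC addrK scalerA mulVf //.
by rewrite scale1r comp_polyXr.
Qed.

Section Char0Poly.
Variable R : idomainType.
Hypothesis charR0 : [pchar R] =i pred0.

Lemma natf_eq0 n : (n%:R == 0 :> R) = (n == 0)%N.
Proof. exact: (pcharf0P R).1 charR0 n. Qed.

Lemma natf_neq0 n : n.+1%:R != 0 :> R.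
Proof. by rewrite natf_eq0. Qed.

Lemma eqf_nat m n : (m%:R == n%:R :> R) = (m == n).
Proof.
wlog le_mn : m n / (m <= n)%N.
  move=> wlog_le; case: (leqP m n) => [/wlog_le // | /ltnW/wlog_le].
  by rewrite eq_sym [n == m]eq_sym.
by rewrite eq_sym -subr_eq0 -natrB // natf_eq0 subn_eq0 eqn_leq le_mn.
Qed.

Lemma size_deriv (p : {poly R}) : size p^`() = (size p).-1.
Proof.
have [p_le1 | p_gt1] := leqP (size p) 1.
  by rewrite (size1_polyC p_le1) derivC size_poly0 size_polyC; case: (_ != 0).
have p_neq0 : p != 0 by rewrite -size_poly_gt0 (ltn_trans _ p_gt1).
have lead_neq0 : p`_(size p).-1 != 0 by rewrite -lead_coefE lead_coef_eq0.
move: p_gt1 (lt_size_deriv p_neq0) lead_neq0.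
case: (size p) => [|[|n]] // _ /= le_dp_n lead_neq0.
apply/eqP; rewrite eqn_leq -ltnS le_dp_n ltnNge; apply/negP => /leq_sizeP/(_ n).
rewrite leqnn coef_deriv -mulr_natr => /(_ isT)/eqP.
by rewrite mulf_eq0 natf_eq0 orbF (negPf lead_neq0).
Qed.

Lemma lead_coef_deriv (p : {poly R}) : lead_coef p^`() = lead_coef p *+ (size p).-1.
Proof.
rewrite !lead_coefE size_deriv coef_deriv.
by case sp : (size p) => [|[|n]] //=; rewrite mulr0n // nth_default ?sp.
Qed.

Lemma deriv_eq0 (p : {poly R}) : p^`() = 0 -> p = (p`_0)%:P.
Proof.
move=> dp0; apply: size1_polyC; have := size_deriv p.
by rewrite dp0 size_poly0; case: (size p) => [|[|]].
Qed.

End Char0Poly.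

Section W1Bracket.
Variable F : fieldType.

Lemma brxx (f : {poly F}) : br f f = 0.
Proof. by rewrite /W1bracket mulrC subrr. Qed.

Lemma br0l (g : {poly F}) : br 0 g = 0.
Proof. by rewrite /W1bracket deriv0 !mul0r subr0. Qed.

Lemma brDr (f g h : {poly F}) : br f (g + h) = br f g + br f h.
Proof. rewrite /W1bracket derivD; ring. Qed.

Lemma brBr (f g h : {poly F}) : br f (g - h) = br f g - br f h.
Proof. rewrite /W1bracket derivB; ring. Qed.

Lemma brZr (f g : {poly F}) c : br f (c *: g) = c *: br f g.
Proof. rewrite /W1bracket derivZ -!mul_polyC; ring. Qed.

Lemma brZl (f g : {poly F}) c : br (c *: f) g = c *: br f g.
Proof. rewrite /W1bracket derivZ -!mul_polyC; ring. Qed.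

Lemma brCl (g : {poly F}) c : br c%:P g = c *: g^`().
Proof. by rewrite /W1bracket derivC mul0r subr0 mul_polyC. Qed.

Lemma br_lin_comb (A B : {poly F}) x1 x2 y1 y2 :
  br (x1 *: A + x2 *: B) (y1 *: A + y2 *: B) = (x1 * y2 - x2 * y1) *: br A B.
Proof. rewrite /W1bracket !derivD !derivZ -!mul_polyC polyCB !polyCM; ring. Qed.

Lemma br_exp (p : {poly F}) n : br p (p ^+ n.+1) = n%:R *: (p^`() * p ^+ n.+1).
Proof.
rewrite /W1bracket deriv_exp /= scaler_nat -mulr_natr -[_ *+ n]mulr_natr exprS.
by rewrite -natr1; ring.
Qed.

Lemma brCr (f : {poly F}) c : br f c%:P = - (c *: f^`()).
Proof. by rewrite /W1bracket derivC mulr0 sub0r mulrC mul_polyC. Qed.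

Lemma br_modp (e q : {poly F}) : (size q <= size e)%N -> br e (q %% e) = br e q.
Proof.
have [-> | e_neq0] := eqVneq e 0; first by rewrite modp0.
move=> q_le_e; rewrite {2}(divp_eq q e) brDr.
have /size1_polyC -> : (size (q %/ e)%R <= 1)%N.
  by rewrite size_divp //; move: (size q) (size e) q_le_e => a b; lia.
by rewrite mul_polyC brZr brxx scaler0 add0r.
Qed.

Lemma brXXn k : br 'X 'X^(k.+1) = k%:R *: 'X^(k.+1) :> {poly F}.
Proof.
rewrite /W1bracket derivXn /= derivX mul1r mulrnAr -exprS mulrSr addrK.
by rewrite scaler_nat.
Qed.

Definition in_span2 (A B f : {poly F}) : Prop := exists x y : F, f = x *: A + y *: B.

Lemma br_in_span2 (A B f g : {poly F}) :
  in_span2 A B f -> in_span2 A B g -> exists c : F, br f g = c *: br A B.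
Proof. by move=> [x1 [x2 ->]] [y1 [y2 ->]]; rewrite br_lin_comb; eexists. Qed.

Hypothesis charF0 : [pchar F] =i pred0.

Lemma size_br (p q : {poly F}) : p != 0 -> q != 0 -> size p != size q ->
  size (br p q) = (size p + size q).-2.
Proof.
move=> p_neq0 q_neq0 neq_pq.
have p_gt0 : (0 < size p)%N by rewrite size_poly_gt0.
have q_gt0 : (0 < size q)%N by rewrite size_poly_gt0.
have dp := size_deriv charF0 p; have dq := size_deriv charF0 q.
set k := (size p + (size q).-1).-2.
have coef_k : (br p q)`_k =
    lead_coef p * lead_coef q * ((size q).-1%:R - (size p).-1%:R).
  have kE : k = (size p^`() + size q).-2.
    by rewrite dp /k; move: (size p) (size q) p_gt0 q_gt0 => a b; lia.
  rewrite coefB {1}/k -dq -mul_lead_coef kE -mul_lead_coef.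
  rewrite !(lead_coef_deriv charF0).
  by rewrite dq mulrnAr mulrnAl mulrBr !mulr_natr.
have -> : ((size p + size q).-2 = k.+1)%N by rewrite /k; lia.
apply/eqP; rewrite eqn_leq; apply/andP; split.
  rewrite (leq_trans (size_polyD _ _)) // size_polyN geq_max.
  rewrite !(leq_trans (size_polyMleq _ _)) // ?dp ?dq /k;
  by move: (size p) (size q) p_gt0 q_gt0 => a b; lia.
rewrite ltnNge; apply/negP => /leq_sizeP/(_ k (leqnn k))/eqP.
rewrite coef_k !mulf_eq0 !lead_coef_eq0 subr_eq0 eqf_nat //.
rewrite (negPf p_neq0) (negPf q_neq0) /=.
by move: (size p) (size q) p_gt0 q_gt0 neq_pq => a b; lia.
Qed.

Lemma in_span2_sl2_eq0 (A B e h l : {poly F}) :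
  in_span2 A B e -> in_span2 A B h -> in_span2 A B l ->
  br e h = e -> br e l = 2%:R *: h -> e = 0.
Proof.
move=> eAB hAB lAB brEH brEL.
have [c1 eE] := br_in_span2 eAB hAB; have [c2 hE] := br_in_span2 eAB lAB.
rewrite brEH in eE; rewrite brEL in hE.
have : 2%:R *: e = 0 by rewrite -[in LHS]brEH -brZr hE {1}eE brZl brZr brxx !scaler0.
by move/eqP; rewrite scaler_eq0 natf_eq0 //= => /eqP.
Qed.

End W1Bracket.

Section Endomorphism.
Variable F : fieldType.
Hypothesis charF0 : [pchar F] =i pred0.
Variable phi : {linear {poly F} -> {poly F}}.
Hypothesis phi_br : forall f g, phi (br f g) = br (phi f) (phi g).
Local Notation e := (phi 1).

Lemma phi_br1Xn k : br e (phi 'X^(k.+1)) = k.+1%:R *: phi 'X^k.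
Proof. by rewrite -phi_br -polyC1 brCl scale1r derivXn -scaler_nat linearZ. Qed.

Lemma phi_brXXn k : br (phi 'X) (phi 'X^(k.+1)) = k%:R *: phi 'X^(k.+1).
Proof. by rewrite -phi_br brXXn linearZ. Qed.

Lemma phi_expand (p : {poly F}) : phi p = \sum_(i < size p) p`_i *: phi 'X^i.
Proof. by rewrite -{1}[p]coefK poly_def linear_sum; apply: eq_bigr => i _; rewrite linearZ. Qed.

Lemma phi1_eq0 : e = 0 -> phi =1 \0.
Proof.
move=> e_0 p; rewrite phi_expand big1 // => i _.
have := phi_br1Xn i; rewrite e_0 br0l.
by move/esym/eqP; rewrite scaler_eq0 natf_eq0 //= => /eqP ->; rewrite scaler0.
Qed.

Section NonConstantImage.
Hypothesis e_gt1 : (1 < size e)%N.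

Let e_neq0 : e != 0.
Proof. by rewrite -size_poly_gt0 (ltn_trans _ e_gt1). Qed.

Lemma size_phiXn_le k : (size (phi 'X^k) <= size e)%N.
Proof.
elim: k => [|k IHk]; first by rewrite expr0.
rewrite leqNgt; apply/negP => gt_k.
have := size_br charF0 e_neq0 (gt_size_poly_neq0 gt_k) (negbT (ltn_eqF gt_k)).
rewrite phi_br1Xn size_scale ?natf_neq0 // => size_k.
by move: IHk gt_k e_gt1; rewrite size_k; move: (size _) (size _) => a b; lia.
Qed.

Lemma phiXn_in_span2 k : in_span2 (br e 'X) (br e 1) (phi 'X^k).
Proof.
set r := phi 'X^(k.+1) %% e.
have br_r : br e r = k.+1%:R *: phi 'X^k by rewrite br_modp ?size_phiXn_le ?phi_br1Xn.
have r_le2 : (size r <= 2)%N.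
  rewrite leqNgt; apply/negP => r_gt2.
  have r_lt : (size r < size e)%N by rewrite ltn_modp.
  have := size_br charF0 e_neq0 (gt_size_poly_neq0 r_gt2) (negbT (gtn_eqF r_lt)).
  rewrite br_r size_scale ?natf_neq0 // => size_k.
  by move: (size_phiXn_le k) r_gt2; rewrite size_k; move: (size _) (size _) => a b; lia.
have kS_neq0 := natf_neq0 charF0 k.
exists (r`_1 / k.+1%:R), (r`_0 / k.+1%:R); apply: (scalerI kS_neq0).
rewrite scalerDr !scalerA ![k.+1%:R * _]mulrC !divfK // -br_r.
by rewrite {1}(size2_polyE r_le2) brDr brZr -alg_polyC brZr.
Qed.

End NonConstantImage.

Lemma size_phi1_le1 : (size e <= 1)%N.
Proof.
rewrite leqNgt; apply/negP => e_gt1.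
have e_0 : e = 0.
  apply: (in_span2_sl2_eq0 charF0 (h := phi 'X) (l := phi 'X^2)).
  - by rewrite -(expr0 'X); exact: phiXn_in_span2.
  - by rewrite -(expr1 'X); exact: phiXn_in_span2.
  - exact: phiXn_in_span2.
  - by rewrite -(expr1 'X) phi_br1Xn scale1r expr0.
  - by rewrite phi_br1Xn.
by move: e_gt1; rewrite e_0 size_poly0.
Qed.

Section ConstantImage.
Hypothesis e_neq0 : e != 0.

Let c := e`_0.
Let u := c^-1 *: phi 'X.

Let eE : e = c%:P.
Proof. exact: size1_polyC size_phi1_le1. Qed.

Let c_neq0 : c != 0.
Proof. by rewrite -polyC_eq0 -eE. Qed.

Lemma deriv_phiX : (phi 'X)^`() = 1.
Proof.
have := phi_br1Xn 0; rewrite scale1r expr1 expr0 [in LHS]eE brCl eE -alg_polyC.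
exact: scalerI.
Qed.

Lemma phiXnE k : phi 'X^k = c *: u ^+ k.
Proof.
elim: k => [|k IHk]; first by rewrite !expr0 eE alg_polyC.
have du : u^`() = c^-1 *: 1 by rewrite derivZ deriv_phiX.
have phiXE : phi 'X = c *: u by rewrite scalerA mulfV // scale1r.
set Q := phi 'X^(k.+1); set Z := c *: u ^+ k.+1.
have dQ : Q^`() = k.+1%:R *: u ^+ k.
  apply: (scalerI c_neq0); rewrite -brCl -eE phi_br1Xn IHk !scalerA.
  by rewrite [c * _]mulrC.
have dZ : Z^`() = k.+1%:R *: u ^+ k.
  rewrite derivZ deriv_exp du /= -scalerAl mul1r -scaler_nat !scalerA.
  by rewrite [c * _]mulrC -mulrA mulfV // mulr1.
have [d QZ] : exists d, Q - Z = d%:P.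
  by exists (Q - Z)`_0; apply: (deriv_eq0 charF0); rewrite derivB dQ dZ subrr.
have brZ : br (phi 'X) Z = k%:R *: Z.
  rewrite phiXE brZl brZr br_exp du -scalerAl mul1r !scalerA; congr (_ *: _).
  by rewrite [c * c * _]mulrAC mulfK // mulrC.
(* Q - Z is a constant and an eigenvector of ad (phi X) for k, while constants
   have eigenvalue -1. *)
have brQZ : br (phi 'X) (Q - Z) = k%:R *: (Q - Z).
  by rewrite brBr phi_brXXn brZ scalerBr.
have d0 : k.+1%:R *: d%:P = 0.
  move: brQZ; rewrite QZ brCr deriv_phiX alg_polyC -natr1 scalerDl scale1r.
  by move=> <-; rewrite addNr.
move/eqP: d0; rewrite scaler_eq0 natf_eq0 //= polyC_eq0 => /eqP d_0.
by apply/eqP; rewrite -subr_eq0 QZ d_0.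
Qed.

Lemma phi_scale_comp p : phi p = c *: (p \Po u).
Proof.
rewrite phi_expand comp_polyE scaler_sumr; apply: eq_bigr => i _.
by rewrite phiXnE !scalerA mulrC.
Qed.

Lemma bijective_phi : bijective phi.
Proof.
have phiXE : phi 'X = 'X + ((phi 'X)`_0)%:P.
  have := deriv_eq0 charF0 (p := phi 'X - 'X).
  rewrite derivB deriv_phiX derivX subrr coefB coefX subr0 => /(_ erefl) <-.
  by rewrite addrC subrK.
have uE : u = c^-1 *: 'X + (c^-1 * (phi 'X)`_0)%:P.
  by rewrite /u {1}phiXE scalerDr scale_polyC.
apply: (@eq_bij _ _ ( *:%R c \o comp_poly u)); last by move=> p; rewrite phi_scale_comp.
apply: bij_comp; first exact: Bijective (scalerK c_neq0) (scalerKV c_neq0).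
by rewrite uE; apply: comp_poly_affine_bij; rewrite invr_eq0.
Qed.

End ConstantImage.

End Endomorphism.

Theorem mainTheorem12 (F : fieldType) (charF0 : [pchar F] =i pred0)
  (phi : {poly F} -> {poly F}) :
  W1_End phi -> (exists f : {poly F}, phi f != 0) -> W1_Aut phi.
Proof.
move=> [phi_lin phi_br] [f phif_neq0]; split; first by split.
pose phiL : {linear {poly F} -> {poly F}} :=
  HB.pack phi (GRing.isLinear.Build F {poly F} {poly F} *:%R phi phi_lin).
have phiL_br : forall f g, phiL (W1bracket f g) = W1bracket (phiL f) (phiL g) := phi_br.
apply: (bijective_phi charF0 phiL_br).
by apply: contra phif_neq0 => /eqP/(phi1_eq0 charF0 phiL_br)/(_ f)/eqP.
Qed.
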